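(* Let $\mathcal{H}_{1}$, $\mathcal{H}_{2}$ and $\mathcal{G}$ be three pdCGs such that both $\mathcal{H}_{1}$ and $\mathcal{H}_{2}$ are covered by $\mathcal{G}$ in the model inclusion order or, equivalently, such that $\mathcal{P}(\mathcal{H}_{1})$ and $\mathcal{P}(\mathcal{H}_{2})$ are two neighbouring submodels of $\mathcal{P}(\mathcal{G})$. Then, if $\mathcal{H}_{1}$ and $\mathcal{H}_{2}$ are $\preceq_{t}$-incomparable, it holds that $\mathcal{H}_{1}\wedge_{s}\mathcal{H}_{2}=\mathcal{H}_{1}\wedge_{t}\mathcal{H}_{2}$. On the other hand, if $\mathcal{H}_{1}\preceq_{t}\mathcal{H}_{2}$ then $\mathcal{H}_{1}\wedge_{s}\mathcal{H}_{2}=\mathcal{H}_{1}\wedge_{t}\mathcal{H}_{1}^{\prime}$ where, for the edge $(i,j)\in\mathbb E_{\mathcal G}$ involved, $\mathcal{H}_{1}$ and $\mathcal{H}_{1}^{\prime}$ are the two graphs $(V, E_{\mathcal{G}}\setminus\{(i,j)\}, \mathbb{L}_{\mathcal{G}}, \mathbb{E}_{\mathcal{G}} \setminus \{(i,j)\})$ and $(V, E_{\mathcal{G}}\setminus\{\tau(i,j)\}, \mathbb{L}_{\mathcal{G}}, \mathbb{E}_{\mathcal{G}} \setminus \{(i,j)\})$ (one each).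
   Context: Let $V=\{1,\dots,p\}$ and let $\tau$ be a twin-pairing function on $V$, i.e. $\tau(i)\in V$ with $\tau(\tau(i))=i$ and $\tau(i)\neq i$; it is extended to edges by $\tau(i,j)=(\tau(i),\tau(j))$ (endpoints reordered so the smaller comes first) and to sets elementwise. Fix a partition $(L,R)$ of $V$ with $\tau(L)=R$, numbered so that $L=\{1,\dots,q\}$, $R=\{q+1,\dots,p\}$. Let $F_V=\{(i,j): i,j\in V, i<j\}$, $F_L=\{(i,j)\in F_V: i<\tau(j)\}$, $F_R=\{(i,j)\in F_V: i>\tau(j)\}$. A coloured graph $\mathcal G=(\mathcal V,\mathcal E)$ consists of a partition $\mathcal V$ of $V$ into vertex colour classes and a partition $\mathcal E$ of an edge set $E\subseteq F_V$ into edge colour classes. It is a coloured graph for paired data (pdCG) if every colour class is either atomic (a single element) or twin-pairing (of the form $\{i,\tau(i)\}$ or $\{(i,j),\tau(i,j)\}$ with $(i,j)\neq\tau(i,j)$). The associated RCON model for paired data $\mathcal{P}(\mathcal G)$ is the family of Gaussian distributions whose concentration matrix has zero entries for missing edges and equal entries for vertices or edges in the same colour class; $\mathcal{P}$ denotes the family of all pdCGs on $V$. Every pdCG is equivalently represented by the quadruplet $(V,E,\mathbb L,\mathbb E)$ where $E$ is the union of the edge colour classes, $E_L=E\cap F_L$, $E_R=E\cap F_R$, $\mathbb L=\{i\in L:\{i\}\in\mathcal V\}$ and $\mathbb E=\{(i,j)\in E_L\cap\tau(E_R): \{(i,j)\}\in\mathcal E\}$. The model inclusion order is $\mathcal H\preceq_s\mathcal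 G$ iff $\mathcal P(\mathcal H)\subseteq\mathcal P(\mathcal G)$ (iff the edge set of $\mathcal H$ is contained in that of $\mathcal G$ and every vertex, resp. edge, colour class of $\mathcal H$ is a union of vertex, resp. edge, colour classes of $\mathcal G$); $\mathcal H$ is covered by $\mathcal G$ in this order if $\mathcal H\prec_s\mathcal G$ and no $\mathcal F\in\mathcal P$ satisfies $\mathcal H\prec_s\mathcal F\prec_s\mathcal G$; $\wedge_s$ denotes the meet (infimum) in the lattice $\langle\mathcal P,\preceq_s\rangle$. The twin order is $\mathcal H\preceq_t\mathcal G$ iff $E_{\mathcal H}\subseteq E_{\mathcal G}$, $\mathbb L_{\mathcal H}\subseteq\mathbb L_{\mathcal G}$ and $\mathbb E_{\mathcal H}\subseteq\mathbb E_{\mathcal G}$; $\langle\mathcal P,\preceq_t\rangle$ is a lattice whose meet is $\mathcal G\wedge_t\mathcal H=(V,E_{\mathcal G}\cap E_{\mathcal H},\mathbb L_{\mathcal G}\cap\mathbb L_{\mathcal H},\mathbb E_{\mathcal G}\cap\mathbb E_{\mathcal H})$. Two neighbouring submodels $\mathcal H_1,\mathcal H_2$ of $\mathcal G$ satisfy $\mathcal H_1\preceq_t\mathcal H_2$ iff, for some $(i,j)\in\mathbb E_{\mathcal G}$, $\mathcal H_2=(V,E_{\mathcal G},\mathbb L_{\mathcal G},\mathbb E_{\mathcal G}\setminus\{(i,j)\})$ and $\mathcal H_1$ is one of the two graphs named in the claim; otherwise they are $\preceq_t$-incomparable. *)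

(* Coloured graphs for paired data (pdCGs) on V = 'I_p
   (0-indexed: vertex k of the paper is k.-1 here). *)
From mathcomp Require Import all_boot all_order.
Set Implicit Arguments. Unset Strict Implicit. Unset Printing Implicit Defensive.

Section PdCG.
Variables (p q : nat) (tau : 'I_p -> 'I_p).

(* tau is a twin-pairing function (involutive, fixed-point free) and
   L = {0..q-1} is mapped onto R = {q..p-1}, i.e. tau(L) = R. *)
Definition twin_pairing : Prop :=
  [/\ involutive tau, (forall i, tau i != i) & (forall i : 'I_p, (i < q) = (q <= tau i))].

Definition vtx := 'I_p.
Definition edge := ('I_p * 'I_p)%type.

Definition tauE (e : edge) : edge :=
  if tau e.1 < tau e.2 then (tau e.1, tau e.2) else (tau e.2, tau e.1).

Definition F_V : {set edge} := [set e : edge | e.1 < e.2].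
Definition F_L : {set edge} := [set e in F_V | e.1 < tau e.2].
Definition F_R : {set edge} := [set e in F_V | tau e.2 < e.1].

Record cgraph := CGraph { cgV : {set {set vtx}} ; cgE : {set {set edge}} }.

Definition cg_edges (G : cgraph) : {set edge} := cover (cgE G).

Definition is_cgraph (G : cgraph) : bool :=
  [&& partition (cgV G) [set: vtx], cg_edges G \subset F_V
    & partition (cgE G) (cg_edges G)].

Definition is_pdCG (G : cgraph) : Prop :=
  is_cgraph G /\
  (forall C, C \in cgV G -> #|C| = 1 \/ exists i, C = [set i; tau i]) /\
  (forall C, C \in cgE G -> #|C| = 1 \/ exists e, e \in F_V /\ e != tauE e /\ C = [set e; tauE e]).

(* Quadruplet representation (E, LL, EE); V is implicit. *)
Definition cg_EL G := cg_edges G :&: F_L.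
Definition cg_ER G := cg_edges G :&: F_R.
Definition cg_LL (G : cgraph) : {set vtx} := [set i : vtx | (i < q) && ([set i] \in cgV G)].
Definition cg_EE (G : cgraph) : {set edge} :=
  [set e in cg_EL G :&: (tauE @: cg_ER G) | [set e] \in cgE G].

Definition quad := ({set edge} * {set vtx} * {set edge})%type.
Definition quad_of (G : cgraph) : quad := (cg_edges G, cg_LL G, cg_EE G).

Definition le_t (H G : cgraph) : bool :=
  [&& cg_edges H \subset cg_edges G, cg_LL H \subset cg_LL G & cg_EE H \subset cg_EE G].
Definition meet_t (Q1 Q2 : quad) : quad :=
  (Q1.1.1 :&: Q2.1.1, Q1.1.2 :&: Q2.1.2, Q1.2 :&: Q2.2).

Definition union_of (T : finType) (P : {set {set T}}) (C : {set T}) : Prop :=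
  exists S : {set {set T}}, S \subset P /\ cover S = C.

(* model inclusion order H <=_s G, i.e. P(H) \subseteq P(G) *)
Definition le_s (H G : cgraph) : Prop :=
  cg_edges H \subset cg_edges G /\
  (forall C, C \in cgV H -> union_of (cgV G) C) /\
  (forall C, C \in cgE H -> union_of (cgE G) C).

Definition lt_s (H G : cgraph) : Prop := le_s H G /\ H <> G.

Definition covered_s (H G : cgraph) : Prop :=
  lt_s H G /\ ~ (exists F, is_pdCG F /\ lt_s H F /\ lt_s F G).

Definition is_meet_s (H1 H2 M : cgraph) : Prop :=
  [/\ is_pdCG M, le_s M H1, le_s M H2 &
      forall F, is_pdCG F -> le_s F H1 -> le_s F H2 -> le_s F M].

End PdCG.

From mathcomp Require Import all_boot all_order.
Set Implicit Arguments. Unset Strict Implicit. Unset Printing Implicit Defensive.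

(* The meet of two pdCGs H1, H2 in the model inclusion order is explicit:
   vertex and edge classes are joined twin-wise, and an edge common to both
   graphs survives unless its twin shares its class in one graph and is
   missing from the other, since a twin-pairing class cannot be split.  The
   quadruplet of this meet is (surviving edges, L1 :&: L2, EE1 :&: EE2), so
   both claims reduce to identifying the surviving edges.  If some common edge
   e did not survive while H1, H2 are covered by G, covering forces H1 to be G
   with the atomic edge tau(e) deleted and H2 to be G with the atomic classes
   {e}, {tau(e)} merged, and then H1 <=_t H2.  Hence for <=_t-incomparable
   neighbours the surviving edges are E1 :&: E2; when H1 <=_t H2 the only
   casualty is the twin of the edge removed from H1. *)

Section Partitions.
Variable T : finType.
Implicit Types (P : {set {set T}}) (C D : {set T}) (x y : T).

Lemma eq_set2_set1 x y : ([set x; y] == [set x]) = (y == x).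
Proof.
apply/eqP/eqP=> [/setP/(_ y)|->]; last exact: setUid.
by rewrite !inE eqxx orbT => /esym/eqP.
Qed.

Lemma union_of_pblock_sub P C x :
  trivIset P -> union_of P C -> x \in C -> pblock P x \subset C.
Proof.
move=> tiP [S [SP <-]] /bigcupP[B BS xB].
by rewrite (def_pblock tiP (subsetP SP _ BS) xB) (bigcup_max B).
Qed.

Lemma pblock_sub_union_of P C :
  C \subset cover P -> {in C, forall x, pblock P x \subset C} -> union_of P C.
Proof.
move=> CP closedC; exists [set B in P | B \subset C]; split.
  by apply/subsetP=> B; rewrite inE => /andP[].
apply/eqP; rewrite eqEsubset; apply/andP; split.
  by apply/bigcupsP=> B; rewrite inE => /andP[].
apply/subsetP=> x xC; apply/bigcupP; exists (pblock P x).
  by rewrite inE pblock_mem ?closedC ?(subsetP CP).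
by rewrite mem_pblock (subsetP CP).
Qed.

Lemma pblock_cover P x y : trivIset P -> y \in pblock P x -> y \in cover P.
Proof. by move=> tiP yx; rewrite -mem_pblock (same_pblock tiP yx). Qed.

Lemma mem_pblockC P x y : trivIset P -> x \in cover P -> y \in cover P ->
  (y \in pblock P x) = (x \in pblock P y).
Proof. by move=> tiP xP yP; rewrite -!eq_pblock // eq_sym. Qed.

Lemma set1_in_partition P D x : partition P D ->
  ([set x] \in P) = (x \in D) && (pblock P x == [set x]).
Proof.
case/and3P=> /eqP <- tiP _; apply/idP/andP=> [x1P|[xP /eqP <-]].
  split; last by rewrite (def_pblock tiP x1P (set11 x)).
  by apply/bigcupP; exists [set x]; rewrite ?set11.
by rewrite pblock_mem.
Qed.

Definition block_fun D (cls : T -> {set T}) :=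
  {in D, forall x, x \in cls x /\ cls x \subset D} /\
  {in D, forall x y, y \in cls x -> cls y = cls x}.

Definition blocks_of D (cls : T -> {set T}) := [set cls x | x in D].

Section Blocks.
Variables (D : {set T}) (cls : T -> {set T}).
Hypothesis clsD : block_fun D cls.

Lemma blocks_of_partition : partition (blocks_of D cls) D.
Proof.
have [cls_sub cls_eq] := clsD; apply/and3P; split.
- rewrite eqEsubset; apply/andP; split.
    by apply/bigcupsP=> _ /imsetP[x xD ->]; case: (cls_sub x xD).
  apply/subsetP=> x xD; apply/bigcupP; exists (cls x); first exact: imset_f.
  by case: (cls_sub x xD).
- apply/trivIsetP=> _ _ /imsetP[x xD ->] /imsetP[y yD ->].
  apply: contraR => /pred0Pn[z /andP[zx zy]].
  have zD : z \in D by case: (cls_sub x xD) => _ /subsetP; apply.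
  by rewrite -(cls_eq x xD z zx) (cls_eq y yD z zy).
- by apply/imsetP=> -[x xD cls0]; case: (cls_sub x xD); rewrite -cls0 inE.
Qed.

Lemma cover_blocks_of : cover (blocks_of D cls) = D.
Proof. exact: cover_partition blocks_of_partition. Qed.

Lemma pblock_blocks_of x : x \in D -> pblock (blocks_of D cls) x = cls x.
Proof.
move=> xD; have [_ tiP _] := and3P blocks_of_partition.
by apply: def_pblock; [| exact: imset_f | case: (clsD.1 x xD)].
Qed.

End Blocks.
End Partitions.

Section TwinBlocks.
Variables (T : finType) (t : T -> T).
Implicit Types (P : {set {set T}}) (D B S : {set T}) (x : T).

Definition twin_blocks P :=
  {in cover P, forall x, pblock P x = [set x] \/ pblock P x = [set x; t x]}.

Lemma pblock_twin P x : twin_blocks P -> x \in cover P ->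
  pblock P x = if t x \in pblock P x then [set x; t x] else [set x].
Proof.
move=> twP xP; case: (twP x xP) => ->; rewrite !inE ?eqxx ?orbT //.
by case: eqP => // ->; rewrite setUid.
Qed.

Lemma eq_twin_set1 S x : t x != x -> S = [set x] \/ S = [set x; t x] ->
  (S == [set x]) = (t x \notin S).
Proof. by move=> txx [] ->; rewrite ?eq_set2_set1 !inE eqxx ?orbT ?(negbTE txx). Qed.

Lemma set1_in_twin_partition P D x : partition P D -> twin_blocks P ->
  x \in D -> t x != x -> ([set x] \in P) = (t x \notin pblock P x).
Proof.
move=> partP twP xD txx; rewrite (set1_in_partition _ partP) xD.
by rewrite eq_twin_set1 //; apply: twP; rewrite (cover_partition partP).
Qed.

(* The block of x in the finest common coarsening of two partitions whose
   blocks are singletons and twin pairs. *)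
Definition twin_join P1 P2 x :=
  if (t x \in pblock P1 x) || (t x \in pblock P2 x) then [set x; t x] else [set x].

Lemma twin_joinC P1 P2 : twin_join P1 P2 =1 twin_join P2 P1.
Proof. by move=> x; rewrite /twin_join orbC. Qed.

Lemma mem_twin_join P1 P2 x : t x != x ->
  (t x \in twin_join P1 P2 x) = (t x \in pblock P1 x) || (t x \in pblock P2 x).
Proof.
by move=> txx; rewrite /twin_join; case: ifP; rewrite !inE ?eqxx ?orbT ?(negbTE txx).
Qed.

Lemma twin_join_twin P1 P2 x :
  twin_join P1 P2 x = [set x] \/ twin_join P1 P2 x = [set x; t x].
Proof. by rewrite /twin_join; case: ifP; [right | left]. Qed.

Lemma pblock_sub_twin_join P1 P2 x : twin_blocks P1 -> x \in cover P1 ->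
  pblock P1 x \subset twin_join P1 P2 x.
Proof.
move=> twP xP; rewrite (pblock_twin twP xP) /twin_join.
case: ifP => _ /=; first exact: subxx.
by case: ifP => _; rewrite sub1set !inE eqxx.
Qed.

Lemma twin_join_sub P1 P2 x B : x \in B ->
  pblock P1 x \subset B -> pblock P2 x \subset B -> twin_join P1 P2 x \subset B.
Proof.
move=> xB /subsetP sub1 /subsetP sub2; rewrite /twin_join.
case: ifP => [/orP tx12|_]; last by rewrite sub1set.
by rewrite subUset !sub1set xB; case: tx12 => [/sub1|/sub2].
Qed.

Lemma set1_in_twin_join P1 P2 D1 D2 D x :
  partition P1 D1 -> partition P2 D2 -> twin_blocks P1 -> twin_blocks P2 ->
  block_fun D (twin_join P1 P2) -> x \in D1 -> x \in D2 -> x \in D -> t x != x ->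
  ([set x] \in blocks_of D (twin_join P1 P2)) = ([set x] \in P1) && ([set x] \in P2).
Proof.
move=> part1 part2 tw1 tw2 tjD xD1 xD2 xD txx.
rewrite (set1_in_partition _ (blocks_of_partition tjD)) xD pblock_blocks_of //=.
rewrite (set1_in_twin_partition part1) ?(set1_in_twin_partition part2) //.
by rewrite -negb_or -mem_twin_join // eq_twin_set1 //; apply: twin_join_twin.
Qed.

Lemma twin_join_block_fun P1 P2 D :
  trivIset P1 -> trivIset P2 -> D \subset cover P1 -> D \subset cover P2 ->
  {in D, forall x, (t x \in pblock P1 x) || (t x \in pblock P2 x) -> t x \in D} ->
  {in D, involutive t} ->
  block_fun D (twin_join P1 P2).
Proof.
move=> ti1 ti2 /subsetP D1 /subsetP D2 Dt tK; split=> x xD.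
  rewrite /twin_join; case: ifP => [/Dt tD|_]; split;
    by rewrite ?subUset ?sub1set ?inE ?eqxx ?xD ?tD.
move=> y; rewrite /twin_join.
case: ifP => [tx12|n12]; last by rewrite inE => /eqP->; rewrite n12.
rewrite !inE => /orP[]/eqP->; first by rewrite tx12.
have txD := Dt x xD tx12.
rewrite tK // -!(mem_pblockC _ (D1 _ xD) (D1 _ txD)) //.
by rewrite -(mem_pblockC _ (D2 _ xD) (D2 _ txD)) // tx12 setUC.
Qed.

End TwinBlocks.

Section PairedData.
Variables (p q : nat) (tau : 'I_p -> 'I_p).
Hypothesis tw : twin_pairing q tau.
Notation tE := (tauE tau).
Implicit Types (G H : cgraph p) (e : edge p).

Let tauK : involutive tau. Proof. by case: tw. Qed.

Lemma tauEK : {in F_V p, involutive tE}.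
Proof.
case=> a b; rewrite inE /tauE /= => ab.
by case: (tau a < tau b) => /=; rewrite !tauK ?ab // ltnNge ltnW.
Qed.

Lemma F_L_F_V e : e \in F_L tau -> e \in F_V p.
Proof. by rewrite inE => /andP[]. Qed.

Lemma F_R_F_V e : e \in F_R tau -> e \in F_V p.
Proof. by rewrite inE => /andP[]. Qed.

Lemma tauE_F_L_neq e : e \in F_L tau -> tE e != e.
Proof.
case: e => a b; rewrite !inE /tauE /= => /andP[ab a_tb].
case: ifP => _; apply/eqP => -[ta tb]; last by move: a_tb; rewrite -tb tauK ltnn.
by case: tw => _ /(_ a); rewrite ta eqxx.
Qed.

Section CGraph.
Variable G : cgraph p.
Hypothesis cgG : is_cgraph G.

Lemma cg_partV : partition (cgV G) [set: vtx p].
Proof. by case/and3P: cgG. Qed.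

Lemma cg_trivV : trivIset (cgV G).
Proof. exact: partition_trivIset cg_partV. Qed.

Lemma cg_coverV : cover (cgV G) = [set: vtx p].
Proof. exact: cover_partition cg_partV. Qed.

Lemma cg_edges_F_V : cg_edges G \subset F_V p.
Proof. by case/and3P: cgG. Qed.

Lemma cg_partE : partition (cgE G) (cg_edges G).
Proof. by case/and3P: cgG. Qed.

Lemma cg_trivE : trivIset (cgE G).
Proof. exact: partition_trivIset cg_partE. Qed.

Lemma pblockE_edges e e' : e' \in pblock (cgE G) e -> e' \in cg_edges G.
Proof. exact: pblock_cover cg_trivE. Qed.

End CGraph.

Lemma le_sP H G : is_cgraph H -> is_cgraph G ->
  le_s H G <-> [/\ cg_edges H \subset cg_edges G,
     (forall i, pblock (cgV G) i \subset pblock (cgV H) i) &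
     {in cg_edges H, forall e, pblock (cgE G) e \subset pblock (cgE H) e}].
Proof.
move=> cgH cgG; split=> [[EHG [leV leE]] | [EHG leV leE]].
  split=> // [i|e eH].
    apply: union_of_pblock_sub (cg_trivV cgG) (leV _ (pblock_mem _)) _.
      by rewrite cg_coverV.
    by rewrite mem_pblock cg_coverV.
  apply: union_of_pblock_sub (cg_trivE cgG) (leE _ (pblock_mem eH)) _.
  by rewrite mem_pblock.
split=> //; split=> C CH.
  apply: pblock_sub_union_of; first by rewrite cg_coverV // subsetT.
  by move=> i iC; rewrite -(def_pblock (cg_trivV cgH) CH iC).
have CEH : C \subset cg_edges H by apply: bigcup_sup.
apply: pblock_sub_union_of (subset_trans CEH EHG) _ => e eC.
by rewrite -(def_pblock (cg_trivE cgH) CH eC) leE ?(subsetP CEH).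
Qed.

Definition pd_vertex_class (C : {set vtx p}) : Prop :=
  #|C| = 1 \/ exists i, C = [set i; tau i].

Definition pd_edge_class (C : {set edge p}) : Prop :=
  #|C| = 1 \/ exists e, e \in F_V p /\ e != tE e /\ C = [set e; tE e].

Lemma pd_edge_class_twin e : e \in F_V p -> pd_edge_class [set e; tE e].
Proof.
move=> eF; case: (eqVneq (tE e) e) => [->|te_e]; last by right; exists e; rewrite eq_sym.
by left; rewrite setUid cards1.
Qed.

Lemma pd_edge_class_set1 e : pd_edge_class [set e].
Proof. by left; rewrite cards1. Qed.

Lemma pdCG_twin_vertices G : is_pdCG tau G -> twin_blocks tau (cgV G).
Proof.
case=> _ [pdV _] i iG; have iB : i \in pblock (cgV G) i by rewrite mem_pblock.
case: (pdV _ (pblock_mem iG)) => [/eqP/cards1P[j pbj] | [j pbj]].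
  by left; move: iB; rewrite pbj inE => /eqP <-.
right; move: iB; rewrite pbj !inE => /orP[]/eqP-> //.
by rewrite tauK setUC.
Qed.

Lemma pdCG_twin_edges G : is_pdCG tau G -> twin_blocks tE (cgE G).
Proof.
case=> cgG [_ pdE] e eG; have eB : e \in pblock (cgE G) e by rewrite mem_pblock.
case: (pdE _ (pblock_mem eG)) => [/eqP/cards1P[f pbf] | [f [fF [_ pbf]]]].
  by left; move: eB; rewrite pbf inE => /eqP <-.
right; move: eB; rewrite pbf !inE => /orP[]/eqP-> //.
by rewrite tauEK // setUC.
Qed.

Lemma blocks_of_pdCG PV (D : {set edge p}) cls :
  partition PV [set: vtx p] -> (forall C, C \in PV -> pd_vertex_class C) ->
  D \subset F_V p -> block_fun D cls -> {in D, forall e, pd_edge_class (cls e)} ->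
  is_pdCG tau (CGraph PV (blocks_of D cls)).
Proof.
move=> partV pdV DF clsD pdE; split; last split=> // C /imsetP[e eD ->].
  by rewrite /is_cgraph /cg_edges /= partV cover_blocks_of // DF blocks_of_partition.
exact: pdE.
Qed.

Lemma mem_cg_EE G e : is_pdCG tau G ->
  (e \in cg_EE tau G) = [&& e \in cg_edges G, e \in F_L tau, tE e \in cg_edges G,
                            tE e \in F_R tau & tE e \notin pblock (cgE G) e].
Proof.
move=> pdG; rewrite /cg_EE /cg_EL /cg_ER inE !in_setI.
have [eG|] //= := boolP (e \in cg_edges G); have [eL|] //= := boolP (e \in F_L tau).
have eF := F_L_F_V eL.
have -> : (e \in tE @: (cg_edges G :&: F_R tau)) = (tE e \in cg_edges G :&: F_R tau).
  apply/imsetP/idP=> [[f fR ->]|teR]; last by exists (tE e); rewrite ?tauEK.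
  by rewrite tauEK // (F_R_F_V (setIP fR).2).
rewrite in_setI -andbA; congr (_ && (_ && _)).
exact: set1_in_twin_partition (cg_partE pdG.1) (pdCG_twin_edges pdG) eG (tauE_F_L_neq eL).
Qed.

End PairedData.

Section Meet.
Variables (p q : nat) (tau : 'I_p -> 'I_p).
Hypothesis tw : twin_pairing q tau.
Notation tE := (tauE tau).

Variables H1 H2 : cgraph p.

Definition meet_edges : {set edge p} :=
  [set e in cg_edges H1 :&: cg_edges H2 | (tE e \in cg_edges H1 :&: cg_edges H2) ||
     (tE e \notin pblock (cgE H1) e) && (tE e \notin pblock (cgE H2) e)].

Definition cg_meet : cgraph p :=
  CGraph (blocks_of [set: vtx p] (twin_join tau (cgV H1) (cgV H2)))
         (blocks_of meet_edges (twin_join tE (cgE H1) (cgE H2))).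

Hypotheses (pd1 : is_pdCG tau H1) (pd2 : is_pdCG tau H2).

Lemma meet_edges_sub e : e \in meet_edges -> e \in cg_edges H1 /\ e \in cg_edges H2.
Proof. by rewrite !inE => /andP[/andP[]]. Qed.

Let meet_edges_tauE : {in meet_edges, involutive tE}.
Proof. by move=> e /meet_edges_sub[/(subsetP (cg_edges_F_V pd1.1)) /(tauEK tw)]. Qed.

Let block_fun_V : block_fun [set: vtx p] (twin_join tau (cgV H1) (cgV H2)).
Proof.
apply: twin_join_block_fun; rewrite ?cg_coverV ?cg_trivV ?(pd1.1, pd2.1) //.
by case: tw => tauK _ _ i _; apply: tauK.
Qed.

Let block_fun_E : block_fun meet_edges (twin_join tE (cgE H1) (cgE H2)).
Proof.
apply: twin_join_block_fun => //; rewrite ?cg_trivE ?(pd1.1, pd2.1) //.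
- by apply/subsetP=> e /meet_edges_sub[].
- by apply/subsetP=> e /meet_edges_sub[].
move=> e eM te12; have [e1 e2] := meet_edges_sub eM.
have te12' : tE e \in cg_edges H1 :&: cg_edges H2.
  by move: eM; rewrite inE -negb_or te12 orbF => /andP[].
by rewrite inE te12' meet_edges_tauE // inE e1 e2.
Qed.

Lemma cg_meet_edges : cg_edges cg_meet = meet_edges.
Proof. exact: cover_blocks_of. Qed.

Lemma cg_meet_pdCG : is_pdCG tau cg_meet.
Proof.
apply: blocks_of_pdCG block_fun_E _ => //.
- exact: blocks_of_partition.
- move=> C /imsetP[i _ ->]; case: (twin_join_twin tau (cgV H1) (cgV H2) i) => ->.
    by left; rewrite cards1.
  by right; exists i.
- by apply/subsetP=> e /meet_edges_sub[/(subsetP (cg_edges_F_V pd1.1))].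
move=> e /meet_edges_sub[/(subsetP (cg_edges_F_V pd1.1)) eF _].
by case: (twin_join_twin tE (cgE H1) (cgE H2) e) => ->;
  [exact: pd_edge_class_set1 | exact: pd_edge_class_twin].
Qed.

Lemma cg_meet_le1 : le_s cg_meet H1.
Proof.
apply/(le_sP cg_meet_pdCG.1 pd1.1); rewrite cg_meet_edges; split.
- by apply/subsetP=> e /meet_edges_sub[].
- move=> i; rewrite pblock_blocks_of ?inE //.
  by apply: pblock_sub_twin_join (pdCG_twin_vertices tw pd1) _; rewrite cg_coverV ?pd1.1.
- move=> e eM; rewrite pblock_blocks_of //.
  by apply: pblock_sub_twin_join (pdCG_twin_edges tw pd1) _; case: (meet_edges_sub eM).
Qed.

Lemma cg_meet_max F : is_pdCG tau F -> le_s F H1 -> le_s F H2 -> le_s F cg_meet.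
Proof.
move=> pdF /(le_sP pdF.1 pd1.1)[FE1 leV1 leE1] /(le_sP pdF.1 pd2.1)[FE2 leV2 leE2].
have FE12 e : e \in cg_edges F -> e \in cg_edges H1 :&: cg_edges H2.
  by move=> eF; rewrite inE (subsetP FE1) ?(subsetP FE2).
have FM : cg_edges F \subset meet_edges.
  apply/subsetP=> e eF; rewrite inE FE12 //=; apply/orP.
  case: (boolP (tE e \in pblock (cgE F) e)) => [teF | teF]; [left | right].
    exact/FE12/(pblockE_edges pdF.1 teF).
  by rewrite (contra (subsetP (leE1 e eF) _)) ?(contra (subsetP (leE2 e eF) _)).
apply/(le_sP pdF.1 cg_meet_pdCG.1); rewrite cg_meet_edges; split=> // [i | e eF].
  rewrite pblock_blocks_of ?inE //; apply: twin_join_sub => //.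
  by rewrite mem_pblock cg_coverV ?pdF.1.
rewrite pblock_blocks_of ?(subsetP FM) //.
by apply: twin_join_sub; [rewrite mem_pblock | exact: leE1 | exact: leE2].
Qed.

Lemma cg_meet_LL : cg_LL q cg_meet = cg_LL q H1 :&: cg_LL q H2.
Proof.
apply/setP=> i; rewrite !inE /=.
rewrite (set1_in_twin_join (cg_partV pd1.1) (cg_partV pd2.1)) ?inE //.
- by case: (i < q).
- apply: (pdCG_twin_vertices tw pd1).
- apply: (pdCG_twin_vertices tw pd2).
- by case: tw => _ /(_ i).
Qed.

Lemma cg_meet_EE : cg_EE tau cg_meet = cg_EE tau H1 :&: cg_EE tau H2.
Proof.
apply/setP=> e; rewrite in_setI !(mem_cg_EE tw) ?cg_meet_edges //; last exact: cg_meet_pdCG.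
apply/idP/idP=> [/and5P[eM eL teM teR] | /andP[]].
  have [e1 e2] := meet_edges_sub eM; have [te1 te2] := meet_edges_sub teM.
  rewrite /= pblock_blocks_of // mem_twin_join ?(tauE_F_L_neq tw) //.
  by rewrite negb_or e1 e2 te1 te2 eL teR.
case/and5P=> e1 eL te1 teR te_e1 /and5P[e2 _ te2 _ te_e2].
have te12 : tE e \in cg_edges H1 :&: cg_edges H2 by rewrite inE te1 te2.
have eM : e \in meet_edges by rewrite inE te12 inE e1 e2.
have teM : tE e \in meet_edges.
  by rewrite inE te12 meet_edges_tauE // inE e1 e2.
rewrite eM eL teM teR /= pblock_blocks_of // mem_twin_join ?(tauE_F_L_neq tw) //.
by rewrite negb_or te_e1 te_e2.
Qed.

Lemma quad_of_meet : quad_of q tau cg_meet =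
  (meet_edges, cg_LL q H1 :&: cg_LL q H2, cg_EE tau H1 :&: cg_EE tau H2).
Proof. by rewrite /quad_of cg_meet_edges cg_meet_LL cg_meet_EE. Qed.

End Meet.

Lemma cg_meetC p (tau : 'I_p -> 'I_p) (H1 H2 : cgraph p) :
  cg_meet tau H1 H2 = cg_meet tau H2 H1.
Proof.
have meetC : meet_edges tau H1 H2 = meet_edges tau H2 H1.
  apply/setP=> e; rewrite !inE (andbC (e \in cg_edges H2)).
  by rewrite (andbC (tauE tau e \in cg_edges H2)) (andbC (tauE tau e \notin _)).
rewrite /cg_meet meetC /blocks_of (eq_imset _ (twin_joinC tau (cgV H1) (cgV H2))).
by rewrite (eq_imset _ (twin_joinC (tauE tau) (cgE H1) (cgE H2))).
Qed.

Lemma cg_meet_is_meet p q (tau : 'I_p -> 'I_p) (H1 H2 : cgraph p) :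
  twin_pairing q tau -> is_pdCG tau H1 -> is_pdCG tau H2 ->
  is_meet_s tau H1 H2 (cg_meet tau H1 H2).
Proof.
move=> tw pd1 pd2; split.
- apply: (cg_meet_pdCG tw pd1 pd2).
- apply: (cg_meet_le1 tw pd1 pd2).
- by rewrite cg_meetC; apply: (cg_meet_le1 tw pd2 pd1).
- apply: (cg_meet_max tw pd1 pd2).
Qed.

Section Covering.
Variables (p q : nat) (tau : 'I_p -> 'I_p).
Hypothesis tw : twin_pairing q tau.
Notation tE := (tauE tau).
Implicit Types (G H F : cgraph p) (e f : edge p).

Lemma cgraph_eq_dec G H : G = H \/ G <> H.
Proof.
case: G H => VG EG [VH EH].
case: (eqVneq VG VH) => [->|nV]; last by right=> -[/eqP]; rewrite (negbTE nV).
case: (eqVneq EG EH) => [->|nE]; first by left.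
by right=> -[/eqP]; rewrite (negbTE nE).
Qed.

Lemma covered_s_eq H F G :
  covered_s tau H G -> is_pdCG tau F -> le_s H F -> lt_s F G -> H = F.
Proof.
move=> [_ noF] pdF HF FG; case: (cgraph_eq_dec H F) => // nHF.
by case: noF; exists F.
Qed.

Lemma pblock_set1_of_le_s H G e : is_pdCG tau G -> is_cgraph H -> le_s H G ->
  e \in cg_edges H -> tE e \notin cg_edges H -> pblock (cgE G) e = [set e].
Proof.
move=> pdG cgH /(le_sP cgH pdG.1)[EHG _ leE] eH teH.
rewrite (pblock_twin (pdCG_twin_edges tw pdG)) ?(subsetP EHG) //.
case: ifP => // /(subsetP (leE e eH)) /(pblockE_edges cgH).
by rewrite (negbTE teH).
Qed.

Lemma pblock_set1_tauE G e : is_pdCG tau G -> e \in cg_edges G -> tE e \in cg_edges G ->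
  tE e != e -> pblock (cgE G) e = [set e] -> pblock (cgE G) (tE e) = [set tE e].
Proof.
move=> pdG eG teG te_e pbe.
have eF := subsetP (cg_edges_F_V pdG.1) _ eG.
rewrite (pblock_twin (pdCG_twin_edges tw pdG)) // (tauEK tw) //.
rewrite -(mem_pblockC (cg_trivE pdG.1)) ?pbe ?inE //.
by rewrite (negbTE te_e).
Qed.

Section DropEdge.
Variables (G : cgraph p) (f : edge p).
Hypotheses (pdG : is_pdCG tau G) (fG : f \in cg_edges G)
  (pbf : pblock (cgE G) f = [set f]).

Definition cg_drop_edge : cgraph p :=
  CGraph (cgV G) (blocks_of (cg_edges G :\ f) (pblock (cgE G))).

Let block_fun_drop : block_fun (cg_edges G :\ f) (pblock (cgE G)).
Proof.
have tiG := cg_trivE pdG.1.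
split=> [e | e _ e' /(same_pblock tiG) //].
rewrite !inE => /andP[ef eG]; rewrite mem_pblock eG; split=> //.
apply/subsetP=> e' e'e; rewrite !inE (pblockE_edges pdG.1 e'e) andbT.
apply: contraNneq ef => e'f; move: e'e; rewrite e'f => /(same_pblock tiG).
by rewrite pbf => /setP/(_ e); rewrite mem_pblock eG inE eq_sym.
Qed.

Lemma cg_drop_edge_edges : cg_edges cg_drop_edge = cg_edges G :\ f.
Proof. exact: cover_blocks_of. Qed.

Lemma cg_drop_edge_pblock x : x \in cg_edges G :\ f ->
  pblock (cgE cg_drop_edge) x = pblock (cgE G) x.
Proof. exact: pblock_blocks_of. Qed.

Lemma cg_drop_edge_pdCG : is_pdCG tau cg_drop_edge.
Proof.
have [pdV pdE] := pdG.2.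
apply: blocks_of_pdCG block_fun_drop _ => //; first exact: cg_partV pdG.1.
  exact: subset_trans (subD1set _ _) (cg_edges_F_V pdG.1).
by move=> e; rewrite inE => /andP[_ eG]; apply/pdE/pblock_mem.
Qed.

Lemma cg_drop_edge_lt : lt_s cg_drop_edge G.
Proof.
split; last first.
  by move/(congr1 (@cg_edges p))/setP/(_ f); rewrite cg_drop_edge_edges fG !inE eqxx.
apply/(le_sP cg_drop_edge_pdCG.1 pdG.1); rewrite cg_drop_edge_edges.
split=> [|//|e eD]; first exact: subD1set.
by rewrite cg_drop_edge_pblock.
Qed.

Lemma le_s_drop_edge H : is_cgraph H -> le_s H G -> f \notin cg_edges H ->
  le_s H cg_drop_edge.
Proof.
move=> cgH /(le_sP cgH pdG.1)[EHG leV leE] fH.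
apply/(le_sP cgH cg_drop_edge_pdCG.1); rewrite cg_drop_edge_edges.
have EHD : cg_edges H \subset cg_edges G :\ f.
  by apply/subsetP=> e eH; rewrite !inE (subsetP EHG) // andbT; apply: contraNneq fH => <-.
by split=> // e eH; rewrite cg_drop_edge_pblock ?(subsetP EHD) ?leE.
Qed.

End DropEdge.

Section MergeTwins.
Variables (G : cgraph p) (e : edge p).
Hypotheses (pdG : is_pdCG tau G) (eG : e \in cg_edges G) (teG : tE e \in cg_edges G)
  (te_e : tE e != e) (pbe : pblock (cgE G) e = [set e]).

Definition merge_class x :=
  if x \in [set e; tE e] then [set e; tE e] else pblock (cgE G) x.

Definition cg_merge_twins : cgraph p :=
  CGraph (cgV G) (blocks_of (cg_edges G) merge_class).

Let pbte : pblock (cgE G) (tE e) = [set tE e].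
Proof. exact: pblock_set1_tauE. Qed.

Let pblock_notin_twins x y : x \in cg_edges G -> x \notin [set e; tE e] ->
  y \in pblock (cgE G) x -> y \notin [set e; tE e].
Proof.
move=> xG xn yx; apply: contra xn => yin.
have pby : pblock (cgE G) y = [set y] by move: yin; rewrite !inE => /orP[]/eqP->.
have := mem_pblock (cgE G) x; rewrite xG -(same_pblock (cg_trivE pdG.1) yx) pby.
by rewrite inE => /eqP ->.
Qed.

Let block_fun_merge : block_fun (cg_edges G) merge_class.
Proof.
have tiG := cg_trivE pdG.1.
split=> x xG; rewrite /merge_class.
  case: ifP => [xin|_]; first by rewrite subUset !sub1set eG teG.
  by rewrite mem_pblock xG; split=> //; apply/subsetP=> y /(pblockE_edges pdG.1).
move=> y; case: ifP => [_ -> //|/negbT xn yx].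
by rewrite (negbTE (pblock_notin_twins xG xn yx)) (same_pblock tiG yx).
Qed.

Lemma cg_merge_twins_edges : cg_edges cg_merge_twins = cg_edges G.
Proof. exact: cover_blocks_of. Qed.

Lemma cg_merge_twins_pblock x : x \in cg_edges G ->
  pblock (cgE cg_merge_twins) x = merge_class x.
Proof. exact: pblock_blocks_of. Qed.

Lemma cg_merge_twins_pdCG : is_pdCG tau cg_merge_twins.
Proof.
have [pdV pdE] := pdG.2.
apply: blocks_of_pdCG block_fun_merge _ => //; first exact: cg_partV pdG.1.
  exact: cg_edges_F_V pdG.1.
move=> x xG; rewrite /merge_class; case: ifP => _; last exact/pdE/pblock_mem.
exact/pd_edge_class_twin/(subsetP (cg_edges_F_V pdG.1)).
Qed.

Lemma cg_merge_twins_lt : lt_s cg_merge_twins G.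
Proof.
split.
  apply/(le_sP cg_merge_twins_pdCG.1 pdG.1); rewrite cg_merge_twins_edges.
  split=> // x xG; rewrite cg_merge_twins_pblock // /merge_class; case: ifP => // xin.
  by move: xin; rewrite !inE => /orP[]/eqP->; rewrite ?pbe ?pbte sub1set !inE eqxx ?orbT.
move/(congr1 (fun H : cgraph p => pblock (cgE H) e)) => /=.
rewrite cg_merge_twins_pblock // pbe /merge_class !inE eqxx /= => /eqP.
by rewrite eq_set2_set1 (negbTE te_e).
Qed.

Lemma le_s_merge_twins H : is_cgraph H -> le_s H G -> [set e; tE e] \in cgE H ->
  le_s H cg_merge_twins.
Proof.
move=> cgH /(le_sP cgH pdG.1)[EHG leV leE] twH.
apply/(le_sP cgH cg_merge_twins_pdCG.1); rewrite cg_merge_twins_edges.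
split=> // x xH; rewrite cg_merge_twins_pblock ?(subsetP EHG) // /merge_class.
by case: ifP => [xin|_]; [rewrite (def_pblock (cg_trivE cgH) twH xin) | exact: leE].
Qed.

End MergeTwins.

Lemma le_t_drop_merge G e : is_pdCG tau G ->
  e \in cg_edges G -> tE e \in cg_edges G -> tE e != e -> pblock (cgE G) e = [set e] ->
  le_t q tau (cg_drop_edge G (tE e)) (cg_merge_twins G e).
Proof.
move=> pdG eG teG te_e pbe; have pbte := pblock_set1_tauE pdG eG teG te_e pbe.
have pdD : is_pdCG tau (cg_drop_edge G (tE e)) by apply: cg_drop_edge_pdCG.
have pdM : is_pdCG tau (cg_merge_twins G e) by apply: cg_merge_twins_pdCG.
have ED : cg_edges (cg_drop_edge G (tE e)) = cg_edges G :\ tE e.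
  exact: cg_drop_edge_edges.
have EM : cg_edges (cg_merge_twins G e) = cg_edges G by apply: cg_merge_twins_edges.
rewrite /le_t ED EM subD1set subxx /=.
apply/subsetP=> g; rewrite !(mem_cg_EE tw) // ED EM.
case/and5P=> gD gL tgD tgR; have [gf gG] := setD1P gD; have [tgf tgG] := setD1P tgD.
rewrite cg_drop_edge_pblock // cg_merge_twins_pblock //.
have gn : g \notin [set e; tE e].
  by rewrite !inE negb_or gf andbT; apply: contraNneq tgf => ->.
by rewrite gG gL tgG tgR /merge_class (negbTE gn).
Qed.

Lemma covered_split_twin_le_t G H1 H2 e :
  is_pdCG tau G -> is_pdCG tau H1 -> is_pdCG tau H2 ->
  covered_s tau H1 G -> covered_s tau H2 G ->
  e \in cg_edges H1 -> e \in cg_edges H2 ->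
  tE e \notin cg_edges H1 -> tE e \in pblock (cgE H2) e ->
  le_t q tau H1 H2.
Proof.
move=> pdG pd1 pd2 cov1 cov2 e1 e2 te1 te_pb2.
have [[H1G _] _] := cov1; have [[H2G _] _] := cov2.
have [EH1G _ _] := (le_sP pd1.1 pdG.1).1 H1G.
have [EH2G _ _] := (le_sP pd2.1 pdG.1).1 H2G.
have eG := subsetP EH1G _ e1.
have teG := subsetP EH2G _ (pblockE_edges pd2.1 te_pb2).
have te_e : tE e != e by apply: contraNneq te1 => ->.
have pbe := pblock_set1_of_le_s pdG pd1.1 H1G e1 te1.
have pbte := pblock_set1_tauE pdG eG teG te_e pbe.
have -> : H1 = cg_drop_edge G (tE e).
  apply: covered_s_eq cov1 _ _ _; first exact: cg_drop_edge_pdCG.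
    by apply: le_s_drop_edge; rewrite ?pd1.1.
  exact: cg_drop_edge_lt.
have -> : H2 = cg_merge_twins G e.
  have twH2 : [set e; tE e] \in cgE H2.
    have := pblock_twin (pdCG_twin_edges tw pd2) e2; rewrite te_pb2 => <-.
    exact: pblock_mem.
  apply: covered_s_eq cov2 _ _ _; first exact: cg_merge_twins_pdCG.
    by apply: le_s_merge_twins; rewrite ?pd2.1.
  exact: cg_merge_twins_lt.
exact: le_t_drop_merge.
Qed.

Lemma meet_edges_incomparable G H1 H2 :
  is_pdCG tau G -> is_pdCG tau H1 -> is_pdCG tau H2 ->
  covered_s tau H1 G -> covered_s tau H2 G ->
  ~~ le_t q tau H1 H2 -> ~~ le_t q tau H2 H1 ->
  meet_edges tau H1 H2 = cg_edges H1 :&: cg_edges H2.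
Proof.
move=> pdG pd1 pd2 cov1 cov2 n12 n21.
apply/setP=> g; rewrite inE; apply/andb_idr=> /setIP[g1 g2].
have [|tg12] //= := boolP (tE g \in cg_edges H1 :&: cg_edges H2).
apply/andP; split; apply/negP=> tg_pb.
  have tg1 := pblockE_edges pd1.1 tg_pb.
  have tg2 : tE g \notin cg_edges H2 by apply: contra tg12 => tg2; rewrite inE tg1.
  by move: n21; rewrite (covered_split_twin_le_t pdG pd2 pd1 cov2 cov1 g2 g1 tg2 tg_pb).
have tg2 := pblockE_edges pd2.1 tg_pb.
have tg1 : tE g \notin cg_edges H1 by apply: contra tg12 => tg1; rewrite inE tg1.
by move: n12; rewrite (covered_split_twin_le_t pdG pd1 pd2 cov1 cov2 g1 g2 tg1 tg_pb).
Qed.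

End Covering.

Lemma meet_edges_drop_twin p q (tau : 'I_p -> 'I_p) (H1 H2 : cgraph p) x :
  twin_pairing q tau -> is_pdCG tau H1 -> is_pdCG tau H2 ->
  cg_edges H1 = cg_edges H2 :\ x -> x \in cg_edges H2 -> tauE tau x \in pblock (cgE H2) x ->
  meet_edges tau H1 H2 = (cg_edges H2 :\ x) :&: (cg_edges H2 :\ tauE tau x).
Proof.
move=> tw pd1 pd2 E12 x2 tx_pb.
have tEK : {in cg_edges H2, involutive (tauE tau)}.
  by move=> g /(subsetP (cg_edges_F_V pd2.1)); exact: (tauEK tw).
have E1E2 : cg_edges H1 :&: cg_edges H2 = cg_edges H2 :\ x.
  by rewrite E12; apply/setIidPl/subD1set.
have tx2 := pblockE_edges pd2.1 tx_pb.
apply/setP=> g; rewrite inE E1E2 in_setI [g \in _ :\ tauE tau x]in_setD1.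
have [->|gtx] /= := eqVneq g (tauE tau x).
  rewrite tEK // setD11 /= -(mem_pblockC (cg_trivE pd2.1)) ?tx_pb //.
  by rewrite !andbF.
have [/setD1P[gx g2]|] //= := boolP (g \in cg_edges H2 :\ x); rewrite g2.
have tgx : tauE tau g != x.
  by apply: contraNneq gtx => <-; rewrite tEK.
have [tg2 | tg2] := boolP (tauE tau g \in cg_edges H2); first by rewrite in_setD1 tgx tg2.
apply/orP; right; apply/andP; split; apply: contra tg2.
  by move/(pblockE_edges pd1.1); rewrite E12 => /setD1P[].
by move/(pblockE_edges pd2.1).
Qed.

Theorem corollary10 (p q : nat) (tau : 'I_p -> 'I_p) :
  twin_pairing q tau ->
  forall H1 H2 G : cgraph p,
    is_pdCG tau H1 -> is_pdCG tau H2 -> is_pdCG tau G ->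
    covered_s tau H1 G -> covered_s tau H2 G ->
    (* twin-incomparable case *)
    ((~~ le_t q tau H1 H2 /\ ~~ le_t q tau H2 H1 ->
      exists M, is_meet_s tau H1 H2 M /\
                quad_of q tau M = meet_t (quad_of q tau H1) (quad_of q tau H2))
    /\
    (* H1 <=_t H2 case *)
    (le_t q tau H1 H2 ->
      forall ij : edge p, ij \in cg_EE tau G ->
      quad_of q tau H2 = (cg_edges G, cg_LL q G, cg_EE tau G :\ ij) ->
      forall Q1' : quad p,
      let A := (cg_edges G :\ ij, cg_LL q G, cg_EE tau G :\ ij) in
      let B := (cg_edges G :\ tauE tau ij, cg_LL q G, cg_EE tau G :\ ij) in
      (quad_of q tau H1 = A /\ Q1' = B) \/ (quad_of q tau H1 = B /\ Q1' = A) ->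
      exists M, is_meet_s tau H1 H2 M /\
                quad_of q tau M = meet_t (quad_of q tau H1) Q1')).
Proof.
move=> tw H1 H2 G pd1 pd2 pdG cov1 cov2.
have meetM := cg_meet_is_meet tw pd1 pd2.
split=> [[n12 n21] | _ ij ijG [E2 LL2 EE2] Q1' A B quad1];
  exists (cg_meet tau H1 H2); split=> //; rewrite (quad_of_meet tw pd1 pd2).
  by rewrite (meet_edges_incomparable tw pdG pd1 pd2 cov1 cov2).
have := ijG; rewrite (mem_cg_EE tw) // => /and5P[ijG' ijL tijG tijR _].
have tij_pb2 : tauE tau ij \in pblock (cgE H2) ij.
  have : ij \notin cg_EE tau H2 by rewrite EE2 setD11.
  by rewrite (mem_cg_EE tw) // E2 ijG' ijL tijG tijR negbK.
have tijK : tauE tau (tauE tau ij) = ij by exact: (tauEK tw (F_L_F_V ijL)).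
have ij_pb2 : ij \in pblock (cgE H2) (tauE tau ij).
  by rewrite (mem_pblockC (cg_trivE pd2.1)) -?/(cg_edges H2) ?E2.
rewrite LL2 EE2; case: quad1 => -[quad1 ->]; rewrite quad1; case: quad1 => E1 -> ->.
  by rewrite (meet_edges_drop_twin tw pd1 pd2 (x := ij)) ?E1 ?E2.
by rewrite (meet_edges_drop_twin tw pd1 pd2 (x := tauE tau ij)) ?E1 ?E2 ?tijK.
Qed.
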